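(* Suppose that for every integer $\ell \ge 4$, $\pi(K^3_\ell) = 1-\left(\frac{2}{\ell-1}\right)^2$ (Turán's conjecture). Then the stability number of $K_4^3$ is infinite, i.e. $\xi(K_4^3)=\infty$.
   Context: $K^3_\ell$ is the complete $3$-graph on $\ell$ vertices. For a family $\mathcal{F}$ of $r$-graphs ($r$-uniform hypergraphs), $\mathcal{F}$-free means containing no member of $\mathcal{F}$ as a subgraph, $\mathrm{ex}(n,\mathcal{F})$ is the maximum number of edges of an $\mathcal{F}$-free $r$-graph on $n$ vertices, and $\pi(\mathcal{F})=\lim_{n\to\infty}\mathrm{ex}(n,\mathcal{F})/\binom{n}{r}$. $t$-stable: for integers $r\ge2$, $t\ge1$, a family $\mathcal{F}$ of $r$-graphs is $t$-stable if there exist $m_0$ and, for every $m\ge m_0$, $r$-graphs $\mathcal{H}^1_m,\dots,\mathcal{H}^t_m$ on $m$ vertices such that: for every $\delta>0$ there exist $\epsilon>0$ and $n_0$ such that for all $n\ge n_0$, every $\mathcal{F}$-free $r$-graph $\mathcal{H}$ on $n$ vertices with $|\mathcal{H}|>(1-\epsilon)\mathrm{ex}(n,\mathcal{F})$ can be transformed into (an isomorphic copy of) some $\mathcal{H}^i_n$ by adding and removing at most $\delta|\mathcal{H}|$ edges. The stability number $\xi(\mathcal{F})$ is the minimum $t$ such that $\mathcal{F}$ is $t$-stable, and $\xi(\mathcal{F})=\infty$ if no such $t$ exists. *)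

From mathcomp Require Import all_boot all_fingroup.
From Stdlib Require Import Reals.
Set Implicit Arguments. Unset Strict Implicit. Unset Printing Implicit Defensive.

Definition hgraph (n : nat) := {set {set 'I_n}}.

Definition uniform (r n : nat) (H : hgraph n) : bool :=
  [forall e in H, #|e| == r].

Definition contains (m n : nat) (F : hgraph m) (H : hgraph n) : bool :=
  [exists f : {ffun 'I_m -> 'I_n},
     injectiveb f && [forall e in F, (f @: e) \in H]].

Definition free (m n : nat) (F : hgraph m) (H : hgraph n) : bool :=
  ~~ contains F H.

Definition ex (r m : nat) (F : hgraph m) (n : nat) : nat :=
  \max_(H : hgraph n | uniform r H && free F H) #|H|.

Definition complete (r l : nat) : hgraph l := [set e : {set 'I_l} | #|e| == r].

Definition relabel (n : nat) (s : {perm 'I_n}) (G : hgraph n) : hgraph n :=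
  [set [set s x | x in e] | e : {set 'I_n} in G].

Definition edit_dist (n : nat) (H G : hgraph n) : nat :=
  #|(H :\: G) :|: (G :\: H)|.

Definition t_stable (r m : nat) (F : hgraph m) (t : nat) : Prop :=
  exists (m0 : nat) (Hs : forall k : nat, 'I_t -> hgraph k),
    (forall k i, (m0 <= k)%N -> uniform r (Hs k i)) /\
    forall delta : R, (delta > 0)%R ->
      exists (eps : R) (n0 : nat), (eps > 0)%R /\
        forall n : nat, (n0 <= n)%N -> (m0 <= n)%N ->
          forall H : hgraph n, uniform r H -> free F H ->
            (INR #|H| > (1 - eps) * INR (ex r F n))%R ->
            exists (i : 'I_t) (s : {perm 'I_n}),
              (INR (edit_dist H (relabel s (Hs n i))) <= delta * INR #|H|)%R.

Definition stability_number_infinite (r m : nat) (F : hgraph m) : Prop :=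
  forall t : nat, (1 <= t)%N -> ~ t_stable r F t.

Definition turan_density_is (r m : nat) (F : hgraph m) (c : R) : Prop :=
  Un_cv (fun n => (INR (ex r F n) / INR 'C(n, r))%R) c.

From mathcomp Require Import all_boot all_fingroup zify ring.
From Stdlib Require Import Reals Lra.
(* Reals rebinds [_ ^ _] on nat and the [ring] tactic; restore ssrnat's and MathComp's. *)
Import ssrnat ring.
Set Implicit Arguments. Unset Strict Implicit. Unset Printing Implicit Defensive.

(* Blowing up a fixed six-vertex pattern with parts of sizes x, x, x, y, y, y
   gives, for every split s = x + y, a K_4^3-free 3-graph on n = 3s vertices
   with (5/9) C(n,3) + O(n^2) edges; under Turán's conjecture all of them are
   near-extremal. Their codegree statistic  sum_{a,b} d(a,b) (d(a,b) - 1)  is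
   27 s^4 - 12 (x y)^2 up to O(n^3), whereas editing a single edge moves it by
   O(n) only. Take t + 1 splits whose products x y are m^2 apart. If each of
   them were delta-close to a relabelling of one of t graphs, two would be
   close to the same graph, so their statistics would agree up to
   O(n^3 + delta n^4), which is less than the 12 m^4 separating them. *)

Lemma cards3 (T : finType) (a b c : T) : (#|[set a; b; c]| == 3) = uniq [:: a; b; c].
Proof.
rewrite -setUA cardsU1 cards2 /= !inE andbT.
by case: (a == b); case: (a == c); case: (b == c).
Qed.

Lemma eq_set3_perm (T : finType) (P : T -> T -> T -> bool) a b c a' b' c' :
  (forall x y z, P x y z = P y x z) -> (forall x y z, P x y z = P x z y) ->
  [set a; b; c] = [set a'; b'; c'] -> uniq [:: a; b; c] -> P a' b' c' = P a b c.
Proof.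
move=> P12 P23 eq_abc.
have mem3 x : x \in [set a'; b'; c'] -> [\/ x = a', x = b' | x = c'].
  by rewrite !inE => /orP[/orP[]|] /eqP ->; [constructor 1 | constructor 2 | constructor 3].
have: [/\ a \in [set a'; b'; c'], b \in [set a'; b'; c'] & c \in [set a'; b'; c']].
  by rewrite -eq_abc !inE !eqxx !orbT.
case=> /mem3[]-> /mem3[]-> /mem3[]->; rewrite /= !inE ?eqxx ?orbT ?andbF //= => _;
  first [ by rewrite P12 | by rewrite P23 | by rewrite P12 P23 | by rewrite P23 P12
        | by rewrite P12 P23 P12 ].
Qed.

Lemma uniq4_codegree (T : eqType) (a b c d : T) :
  [&& c != d, uniq [:: a; b; c] & uniq [:: a; b; d]] = uniq [:: a; b; c; d].
Proof.
rewrite /= !inE !andbT.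
by case: (a == b); case: (a == c); case: (a == d); case: (b == c); case: (b == d); case: (c == d).
Qed.

Lemma sum_mem_card (T : finType) (A : {pred T}) : \sum_(x : T) (x \in A) = #|A|.
Proof. by rewrite -sum1_card [RHS]big_mkcond; apply: eq_bigr => x _; case: (x \in A). Qed.

Lemma sum_andb_mem (T : finType) (P : bool) (A : {pred T}) :
  \sum_(x : T) (P && (x \in A)) = P * #|A|.
Proof. by case: P; [rewrite mul1n -sum_mem_card | rewrite mul0n big1]. Qed.

Lemma cardsD1_pred (T : finType) (A : {set T}) a k : a \in A -> #|A| = k.+1 -> #|A :\ a| = k.
Proof. by move=> aA; rewrite (cardsD1 a A) aA => -[]. Qed.

Lemma sum_orderings3 (T : finType) (e : {set T}) : #|e| = 3 ->
  \sum_(a : T) \sum_(b : T) \sum_(c : T) ((a \in e) && (b \in e :\ a) && (c \in e :\ a :\ b)) = 6.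
Proof.
move=> e3; under eq_bigr => a _ do under eq_bigr => b _ do rewrite sum_andb_mem.
transitivity (\sum_(a : T) \sum_(b : T) ((a \in e) && (b \in e :\ a))).
  apply: eq_bigr => a _; apply: eq_bigr => b _.
  case: (boolP (a \in e)) => //= ae; case: (boolP (b \in e :\ a)) => //= bea.
  by rewrite (cardsD1_pred bea (cardsD1_pred ae e3)).
under eq_bigr => a _ do rewrite sum_andb_mem.
transitivity (\sum_(a : T) (a \in e) * 2).
  by apply: eq_bigr => a _; case: (boolP (a \in e)) => // ae; rewrite (cardsD1_pred ae e3).
by rewrite -big_distrl /= sum_mem_card e3.
Qed.

Lemma sum_not_uniq_rcons n (s : seq 'I_n) :
  \sum_(d : 'I_n) ~~ uniq (rcons s d) <= size s + n * ~~ uniq s.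
Proof.
under eq_bigr => d _ do rewrite rcons_uniq negb_and negbK.
apply: (@leq_trans (\sum_(d : 'I_n) ((d \in s) + ~~ uniq s))).
  by apply: leq_sum => d _; case: (d \in s); case: (uniq s).
rewrite big_split sum_mem_card sum_nat_const card_ord leq_add2r.
exact: card_size.
Qed.

Lemma sum_not_uniq3 n :
  \sum_(a : 'I_n) \sum_(b : 'I_n) \sum_(c : 'I_n) ~~ uniq [:: a; b; c] <= 3 * n ^ 2.
Proof.
apply: (@leq_trans (\sum_(a : 'I_n) \sum_(b : 'I_n) (2 + n * ~~ uniq [:: a; b]))).
  by apply: leq_sum => a _; apply: leq_sum => b _; exact: (sum_not_uniq_rcons [:: a; b]).
apply: (@leq_trans (\sum_(a : 'I_n) 3 * n)); last by rewrite sum_nat_const card_ord; lia.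
apply: leq_sum => a _; rewrite big_split sum_nat_const card_ord -big_distrr.
have le1 : \sum_(b : 'I_n) ~~ uniq [:: a; b] <= 1 + n * 0 := sum_not_uniq_rcons [:: a].
by apply: leq_trans (leq_add (leqnn _) (leq_mul (leqnn n) le1)) _; lia.
Qed.

Lemma sum_not_uniq4 n :
  \sum_(a : 'I_n) \sum_(b : 'I_n) \sum_(c : 'I_n) \sum_(d : 'I_n) ~~ uniq [:: a; b; c; d]
    <= 6 * n ^ 3.
Proof.
apply: (@leq_trans
  (\sum_(a : 'I_n) \sum_(b : 'I_n) \sum_(c : 'I_n) (3 + n * ~~ uniq [:: a; b; c]))).
  apply: leq_sum => a _; apply: leq_sum => b _; apply: leq_sum => c _.
  exact: (sum_not_uniq_rcons [:: a; b; c]).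
under eq_bigr => a _ do under eq_bigr => b _ do
  rewrite big_split sum_nat_const card_ord -big_distrr.
under eq_bigr => a _ do rewrite big_split sum_nat_const card_ord -big_distrr.
rewrite big_split sum_nat_const card_ord -big_distrr.
by apply: leq_trans (leq_add (leqnn _) (leq_mul (leqnn n) (sum_not_uniq3 n))) _; lia.
Qed.

Lemma pigeonhole_ord M t (P : 'I_M -> 'I_t -> bool) : t < M -> (forall j, exists i, P j i) ->
  exists (j k : 'I_M) (i : 'I_t), [/\ j < k, P j i & P k i].
Proof.
case: t P => [|t] P tM someP; first by have [[]] := someP (Ordinal tM).
pose g j := odflt ord0 [pick i | P j i].
have Pg j : P j (g j) by rewrite /g; case: pickP => [//|noP]; have [i] := someP j; rewrite noP.
have /injectivePn[j [k jk gjk]] : ~~ injectiveb g.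
  by apply/injectiveP => /leq_card; rewrite !card_ord leqNgt tM.
case: (ltngtP j k) => [jk' | kj | /val_inj jk_eq]; last by rewrite jk_eq eqxx in jk.
- by exists j, k, (g j); rewrite {2}gjk.
- by exists k, j, (g j); rewrite {1}gjk.
Qed.

Lemma bin3_le n : 'C(n, 3) * 6 <= n ^ 3.
Proof.
rewrite (_ : 6 = 3`!) // bin_ffact !ffactnS ffactn0 muln1.
rewrite !expnS expn0 muln1 leq_mul // leq_mul ?leq_pred //.
exact: leq_trans (leq_pred _) (leq_pred _).
Qed.

Lemma card_uniform_le r n (H : hgraph n) : uniform r H -> #|H| <= 'C(n, r).
Proof.
move=> /forallP unifH; rewrite -[n in 'C(n, r)]card_ord -card_draws.
by apply/subset_leq_card/subsetP => e eH; rewrite inE; exact: (implyP (unifH e)).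
Qed.

Lemma edit_distC n (H G : hgraph n) : edit_dist H G = edit_dist G H.
Proof. by rewrite /edit_dist setUC. Qed.

Section EdgeCounts.

Variable n : nat.
Implicit Types H X : hgraph n.

Definition ordered_edges H : nat :=
  \sum_(a : 'I_n) \sum_(b : 'I_n) \sum_(c : 'I_n) ([set a; b; c] \in H).

(* With d(a, b) the codegree of the pair (a, b), this is sum_{a,b} d(a, b) (d(a, b) - 1). *)
Definition codegree_pairs H : nat :=
  \sum_(a : 'I_n) \sum_(b : 'I_n) \sum_(c : 'I_n) \sum_(d : 'I_n)
    [&& c != d, [set a; b; c] \in H & [set a; b; d] \in H].

Definition symdiff H X : hgraph n := (H :\: X) :|: (X :\: H).

Lemma uniform_relabel r (s : {perm 'I_n}) X : uniform r X -> uniform r (relabel s X).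
Proof.
move=> /forallP unifX; apply/forallP => e; apply/implyP => /imsetP[f fX ->].
by rewrite card_imset; [exact: (implyP (unifX f)) | exact: perm_inj].
Qed.

Lemma uniform_symdiff r H X : uniform r H -> uniform r X -> uniform r (symdiff H X).
Proof.
move=> /forallP unifH /forallP unifX; apply/forallP => e; apply/implyP.
by rewrite !inE => /orP[/andP[_ eH] | /andP[_ eX]];
  [exact: (implyP (unifH e)) | exact: (implyP (unifX e))].
Qed.

Lemma ordered_edges_le H : uniform 3 H -> ordered_edges H <= 6 * #|H|.
Proof.
move=> /forallP unifH.
apply: (@leq_trans (\sum_(e in H) \sum_(a : 'I_n) \sum_(b : 'I_n) \sum_(c : 'I_n)
  ((a \in e) && (b \in e :\ a) && (c \in e :\ a :\ b)))); last first.
  rewrite mulnC -sum_nat_const; apply: leq_sum => e eH; rewrite sum_orderings3 //.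
  by apply/eqP; have := unifH e; rewrite eH.
rewrite [X in _ <= X]exchange_big; apply: leq_sum => a _.
rewrite [X in _ <= X]exchange_big; apply: leq_sum => b _.
rewrite [X in _ <= X]exchange_big; apply: leq_sum => c _.
case abcH: ([set a; b; c] \in H) => //; rewrite (bigD1 _ abcH) /= addnC ltn_addl //.
have := unifH [set a; b; c]; rewrite abcH cards3 /= !inE.
rewrite !eqxx !orbT ![_ == a]eq_sym [c == b]eq_sym.
by case: (a == b); case: (a == c); case: (b == c).
Qed.

Lemma codegree_pairs_symdiff H X :
  codegree_pairs H <= codegree_pairs X + 2 * n * ordered_edges (symdiff H X).
Proof.
pose D := symdiff H X.
have sum_third : \sum_(a : 'I_n) \sum_(b : 'I_n) \sum_(c : 'I_n) \sum_(d : 'I_n)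
    ([set a; b; c] \in D) = n * ordered_edges D.
  rewrite /ordered_edges !big_distrr; apply: eq_bigr => a _; rewrite big_distrr.
  apply: eq_bigr => b _; rewrite big_distrr.
  by apply: eq_bigr => c _; rewrite sum_nat_const card_ord.
have sum_fourth : \sum_(a : 'I_n) \sum_(b : 'I_n) \sum_(c : 'I_n) \sum_(d : 'I_n)
    ([set a; b; d] \in D) = n * ordered_edges D.
  rewrite /ordered_edges !big_distrr; apply: eq_bigr => a _; rewrite big_distrr.
  by apply: eq_bigr => b _; rewrite sum_nat_const card_ord.
rewrite (_ : 2 * n * _ = n * ordered_edges D + n * ordered_edges D); last by ring.
rewrite -{1}sum_third -sum_fourth /codegree_pairs -!big_split.
apply: leq_sum => a _; rewrite -!big_split; apply: leq_sum => b _.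
rewrite -!big_split; apply: leq_sum => c _; rewrite -!big_split; apply: leq_sum => d _ /=.
rewrite /D /symdiff !inE.
by case: (c != d); case: ([set a; b; c] \in H); case: ([set a; b; c] \in X);
  case: ([set a; b; d] \in H); case: ([set a; b; d] \in X).
Qed.

Lemma codegree_pairs_edit_dist H X : uniform 3 H -> uniform 3 X ->
  codegree_pairs H <= codegree_pairs X + 12 * n * edit_dist H X.
Proof.
move=> unifH unifX; apply: leq_trans (codegree_pairs_symdiff H X) _.
rewrite leq_add2l (_ : 12 * n * _ = 2 * n * (6 * edit_dist H X)); last by ring.
by rewrite leq_mul2l ordered_edges_le ?orbT // uniform_symdiff.
Qed.

Lemma mem_relabel (s : {perm 'I_n}) X a b c :
  ([set s a; s b; s c] \in relabel s X) = ([set a; b; c] \in X).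
Proof.
rewrite /relabel (_ : [set s a; s b; s c] = [set s x | x in [set a; b; c]]).
  exact/mem_imset/imset_inj/perm_inj.
by rewrite !imsetU !imset_set1.
Qed.

Lemma codegree_pairs_relabel (s : {perm 'I_n}) X :
  codegree_pairs (relabel s X) = codegree_pairs X.
Proof.
rewrite /codegree_pairs (reindex_inj (@perm_inj _ s)); apply: eq_bigr => a _.
rewrite (reindex_inj (@perm_inj _ s)); apply: eq_bigr => b _.
rewrite (reindex_inj (@perm_inj _ s)); apply: eq_bigr => c _.
rewrite (reindex_inj (@perm_inj _ s)); apply: eq_bigr => d _.
by rewrite !mem_relabel (inj_eq (@perm_inj _ s)).
Qed.

End EdgeCounts.

Definition pattern_arcs : seq (nat * nat) :=
  [:: (0, 1); (0, 5); (1, 2); (1, 3); (2, 0); (2, 4);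
      (3, 0); (3, 5); (4, 1); (4, 3); (5, 2); (5, 4)].

Definition arc (a b : nat) : bool := (a, b) \in pattern_arcs.

Definition pattern_edge (a b c : nat) : bool :=
  let arcs_abc := arc a b + arc b a + arc a c + arc c a + arc b c + arc c b in
  [&& a < 6, b < 6, c < 6 &
  [|| arc a b && arc b c && arc c a, arc b a && arc c b && arc a c |
      (arcs_abc == 2) && ~~ [|| arc a b && arc a c, arc b a && arc b c | arc c a && arc c b]]].

Lemma pattern_edgeC12 a b c : pattern_edge a b c = pattern_edge b a c.
Proof.
rewrite /pattern_edge; case: (a < 6) (b < 6) (c < 6) => [] [] [] //=.
by case: (arc a b) (arc b a) (arc a c) (arc c a) (arc b c) (arc c b) => [] [] [] [] [] [].
Qed.

Lemma pattern_edgeC23 a b c : pattern_edge a b c = pattern_edge a c b.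
Proof.
rewrite /pattern_edge; case: (a < 6) (b < 6) (c < 6) => [] [] [] //=.
by case: (arc a b) (arc b a) (arc a c) (arc c a) (arc b c) (arc c b) => [] [] [] [] [] [].
Qed.

Lemma pattern_K4_free a b c d :
  ~~ [&& pattern_edge a b c, pattern_edge a b d, pattern_edge a c d & pattern_edge b c d].
Proof.
have check : all (fun a => all (fun b => all (fun c => all (fun d =>
    ~~ [&& pattern_edge a b c, pattern_edge a b d, pattern_edge a c d & pattern_edge b c d])
    (iota 0 6)) (iota 0 6)) (iota 0 6)) (iota 0 6) by vm_compute.
apply/negP => /and4P[abc abd acd bcd].
case/and4P: (abc) => a6 b6 c6 _; case/and4P: (abd) => _ _ d6 _.
move: check => /allP/(_ a); rewrite mem_iota a6 => /(_ isT) /allP/(_ b).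
rewrite mem_iota b6 => /(_ isT) /allP/(_ c); rewrite mem_iota c6 => /(_ isT) /allP/(_ d).
by rewrite mem_iota d6 /= => /(_ isT); rewrite abc abd acd bcd.
Qed.

(* The vertices of the blow-up come in three blocks of x + y consecutive
   vertices: in block q the first x vertices form part q, the other y part 3 + q. *)
Definition part (x y v : nat) : nat :=
  if v %% (x + y) < x then v %/ (x + y) else 3 + v %/ (x + y).

Definition part_size (x y b : nat) : nat := if b < 3 then x else y.

Definition blowup (n x y : nat) : hgraph n :=
  [set e : {set 'I_n} | [exists a : 'I_n, exists b : 'I_n, exists c : 'I_n,
     [&& e == [set a; b; c], uniq [:: a; b; c] &
         pattern_edge (part x y a) (part x y b) (part x y c)]]].

Lemma mem_blowup n x y (a b c : 'I_n) : ([set a; b; c] \in blowup n x y) =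
  uniq [:: a; b; c] && pattern_edge (part x y a) (part x y b) (part x y c).
Proof.
apply/idP/idP => [|/andP[abc_uniq abc_edge]]; last first.
  by rewrite inE; apply/existsP; exists a; apply/existsP; exists b; apply/existsP; exists c;
    rewrite eqxx abc_uniq.
rewrite inE => /existsP[a' /existsP[b' /existsP[c' /and3P[/eqP eq_abc abc_uniq' abc_edge']]]].
have abc_uniq : uniq [:: a; b; c] by rewrite -cards3 eq_abc cards3.
pose P (u v w : 'I_n) := pattern_edge (part x y u) (part x y v) (part x y w).
rewrite abc_uniq -[_ && _]/(P a b c) -(eq_set3_perm (P := P) _ _ eq_abc abc_uniq) //.
- by move=> *; exact: pattern_edgeC12.
- by move=> *; exact: pattern_edgeC23.
Qed.

Lemma blowup_uniform n x y : uniform 3 (blowup n x y).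
Proof.
apply/forallP => e; apply/implyP; rewrite inE.
by case/existsP=> a /existsP[b /existsP[c /and3P[/eqP -> abc_uniq _]]]; rewrite cards3.
Qed.

Lemma blowup_K4_free n x y : free (complete 3 4) (blowup n x y).
Proof.
apply/negP => /existsP[f /andP[_ /forallP f_edges]].
pose v (i : 'I_4) := part x y (f i).
have edge i j k : uniq [:: i; j; k] -> pattern_edge (v i) (v j) (v k).
  move=> ijk_uniq; have := implyP (f_edges [set i; j; k]).
  by rewrite inE cards3 ijk_uniq !imsetU !imset_set1 mem_blowup => /(_ isT) /andP[].
have := pattern_K4_free (v (@Ordinal 4 0 isT)) (v (@Ordinal 4 1 isT)) (v (@Ordinal 4 2 isT))
  (v (@Ordinal 4 3 isT)).
by rewrite !edge.
Qed.

Lemma sum_block x y i (F : nat -> nat) : 0 < x + y ->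
  \sum_(i * (x + y) <= v < i.+1 * (x + y)) F (part x y v) = x * F i + y * F (3 + i).
Proof.
move=> s_gt0; set s := x + y.
have part_lo v : v < x -> part x y (v + i * s) = i.
  move=> vx; have vs : v < s := leq_trans vx (leq_addr y x).
  by rewrite /part -/s addnC modnMDl (modn_small vs) vx divnMDl // (divn_small vs) addn0.
have part_hi v : v < y -> part x y (v + (i * s + x)) = 3 + i.
  move=> vy; have xvs : x + v < s by rewrite ltn_add2l.
  rewrite /part -/s (_ : v + _ = i * s + (x + v)); last by lia.
  by rewrite modnMDl (modn_small xvs) ltnNge leq_addr /= divnMDl // (divn_small xvs) addn0.
rewrite mulSn addnC (@big_cat_nat _ _ _ (i * s + x)) ?leq_addr ?leq_add2l ?leq_addr //=.
rewrite -{1}(add0n (i * s)) -(add0n (i * s + x)) !big_addn.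
have -> : 0 + (i * s + x) - i * s = x by lia.
have -> : i * s + s - (i * s + x) = y by rewrite /s; lia.
congr (_ + _); [rewrite -[x in RHS]subn0 | rewrite -[y in RHS]subn0];
  rewrite -sum_nat_const_nat; apply: eq_big_nat => v /andP[_ v_lt].
- by rewrite part_lo.
- by rewrite part_hi.
Qed.

Lemma sum_part n x y (F : nat -> nat) : n = 3 * (x + y) ->
  \sum_(v < n) F (part x y v) = \sum_(0 <= b < 6) part_size x y b * F b.
Proof.
move=> ->; have [s0 | s_gt0] := posnP (x + y).
  have [-> ->] : x = 0 /\ y = 0 by lia.
  by rewrite big_ord0 big1_seq // => b _; rewrite /part_size if_same.
rewrite -(big_mkord xpredT (fun v => F (part x y v))) big_nat_mul.
rewrite (eq_big_nat _ _ (fun i _ => sum_block i F s_gt0)).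
by rewrite unlock /= /part_size /=; ring.
Qed.

Section BlowupSums.

Variables n x y : nat.
Hypothesis n_eq : n = 3 * (x + y).

Let pe (a b c : 'I_n) : bool := pattern_edge (part x y a) (part x y b) (part x y c).

Lemma sum_pattern_edge :
  \sum_(a : 'I_n) \sum_(b : 'I_n) \sum_(c : 'I_n) pe a b c = 15 * (x + y) ^ 3.
Proof.
rewrite /pe; under eq_bigr => a _ do under eq_bigr => b _ do
  rewrite (sum_part (fun c => pattern_edge (part x y a) (part x y b) c) n_eq).
under eq_bigr => a _ do rewrite (sum_part (fun b => \sum_(0 <= c < 6)
  part_size x y c * pattern_edge (part x y a) b c) n_eq).
rewrite (sum_part (fun a => \sum_(0 <= b < 6) part_size x y b *
  \sum_(0 <= c < 6) part_size x y c * pattern_edge a b c) n_eq).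
by rewrite unlock /= /part_size /=; ring.
Qed.

Lemma sum_pattern_codegree :
  \sum_(a : 'I_n) \sum_(b : 'I_n) \sum_(c : 'I_n) \sum_(d : 'I_n) (pe a b c && pe a b d)
    + 12 * (x * y) ^ 2 = 27 * (x + y) ^ 4.
Proof.
rewrite /pe; under eq_bigr => a _ do under eq_bigr => b _ do under eq_bigr => c _ do
  rewrite (sum_part (fun d => pattern_edge (part x y a) (part x y b) (part x y c)
    && pattern_edge (part x y a) (part x y b) d) n_eq).
under eq_bigr => a _ do under eq_bigr => b _ do rewrite (sum_part (fun c =>
  \sum_(0 <= d < 6) part_size x y d * (pattern_edge (part x y a) (part x y b) c
    && pattern_edge (part x y a) (part x y b) d)) n_eq).
under eq_bigr => a _ do rewrite (sum_part (fun b => \sum_(0 <= c < 6) part_size x y c *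
  \sum_(0 <= d < 6) part_size x y d * (pattern_edge (part x y a) b c
    && pattern_edge (part x y a) b d)) n_eq).
rewrite (sum_part (fun a => \sum_(0 <= b < 6) part_size x y b *
  \sum_(0 <= c < 6) part_size x y c * \sum_(0 <= d < 6) part_size x y d *
    (pattern_edge a b c && pattern_edge a b d)) n_eq).
by rewrite unlock /= /part_size /=; ring.
Qed.

Lemma blowup_ordered_edges : 15 * (x + y) ^ 3 <= ordered_edges (blowup n x y) + 3 * n ^ 2.
Proof.
rewrite -sum_pattern_edge.
apply: leq_trans (leq_add (leqnn _) (sum_not_uniq3 n)); rewrite -!big_split.
apply: leq_sum => a _; rewrite -big_split; apply: leq_sum => b _.
rewrite -big_split; apply: leq_sum => c _; rewrite mem_blowup /pe.
by case: (uniq _); case: (pattern_edge _ _ _).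
Qed.

Lemma blowup_codegree_pairs_le :
  codegree_pairs (blowup n x y) + 12 * (x * y) ^ 2 <= 27 * (x + y) ^ 4.
Proof.
rewrite -sum_pattern_codegree leq_add2r.
apply: leq_sum => a _; apply: leq_sum => b _; apply: leq_sum => c _; apply: leq_sum => d _.
by rewrite !mem_blowup /pe; case: (c != d); case: (uniq _); case: (uniq _);
  case: (pattern_edge _ _ _); case: (pattern_edge _ _ _).
Qed.

Lemma blowup_codegree_pairs_ge :
  27 * (x + y) ^ 4 <= codegree_pairs (blowup n x y) + 12 * (x * y) ^ 2 + 6 * n ^ 3.
Proof.
rewrite -sum_pattern_codegree addnAC leq_add2r.
apply: leq_trans (leq_add (leqnn _) (sum_not_uniq4 n)); rewrite /codegree_pairs -!big_split.
apply: leq_sum => a _; rewrite -big_split; apply: leq_sum => b _.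
rewrite -big_split; apply: leq_sum => c _; rewrite -big_split; apply: leq_sum => d _.
rewrite !mem_blowup -uniq4_codegree /pe.
by case: (c != d); case: (uniq _); case: (uniq _); case: (pattern_edge _ _ _);
  case: (pattern_edge _ _ _).
Qed.

Lemma blowup_card_ge : 5 * n ^ 3 <= 54 * #|blowup n x y| + 27 * n ^ 2.
Proof.
have := blowup_ordered_edges; have := ordered_edges_le (blowup_uniform n x y).
have -> : 5 * n ^ 3 = 9 * (15 * (x + y) ^ 3) by rewrite n_eq; ring.
lia.
Qed.

End BlowupSums.

Lemma blowup_codegree_gap n x y x' y' : n = 3 * (x + y) -> n = 3 * (x' + y') ->
  codegree_pairs (blowup n x' y') + 12 * (x' * y') ^ 2
    <= codegree_pairs (blowup n x y) + 12 * (x * y) ^ 2 + 6 * n ^ 3.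
Proof.
move=> n_eq n_eq'; have sum_eq : x' + y' = x + y by lia.
apply: leq_trans (blowup_codegree_pairs_le n_eq') _.
by rewrite sum_eq; exact: blowup_codegree_pairs_ge.
Qed.

Definition family_blowup M m j : hgraph (6 * M * m) :=
  blowup (6 * M * m) (j * m) ((2 * M - j) * m).

Lemma family_blowup_order M m j : j <= 2 * M -> 6 * M * m = 3 * (j * m + (2 * M - j) * m).
Proof. by move=> j_le; rewrite -mulnDl subnKC //; ring. Qed.

Lemma product_increasing M j k : j < k <= M -> j * (2 * M - j) < k * (2 * M - k).
Proof. by move=> /andP[jk kM]; nia. Qed.

Lemma family_far_apart M m j k (X : hgraph (6 * M * m)) (sj sk : {perm 'I_(6 * M * m)}) :
  j < k <= M -> uniform 3 X ->
  12 * m ^ 4 <= 6 * (6 * M * m) ^ 3 + 12 * (6 * M * m) *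
    (edit_dist (family_blowup M m j) (relabel sj X)
     + edit_dist (family_blowup M m k) (relabel sk X)).
Proof.
move=> /andP[jk kM] unifX.
have unif_family i : uniform 3 (family_blowup M m i) by exact: blowup_uniform.
have near_j := codegree_pairs_edit_dist (unif_family j) (uniform_relabel sj unifX).
have near_k := codegree_pairs_edit_dist (uniform_relabel sk unifX) (unif_family k).
rewrite codegree_pairs_relabel in near_j; rewrite codegree_pairs_relabel edit_distC in near_k.
have [j_le k_le] : j <= 2 * M /\ k <= 2 * M by lia.
have gap := blowup_codegree_gap (family_blowup_order m j_le) (family_blowup_order m k_le).
have sq : (j * m * ((2 * M - j) * m)) ^ 2 + m ^ 4 <= (k * m * ((2 * M - k) * m)) ^ 2.
  have -> : j * m * ((2 * M - j) * m) = j * (2 * M - j) * m ^ 2 by ring.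
  have -> : k * m * ((2 * M - k) * m) = k * (2 * M - k) * m ^ 2 by ring.
  move: (product_increasing (ltac:(lia) : j < k <= M)).
  move: (j * (2 * M - j)) (k * (2 * M - k)) => u v uv.
  have uv2 : u ^ 2 + 1 <= v ^ 2 by nia.
  have sq_mul w : (w * m ^ 2) ^ 2 = w ^ 2 * m ^ 4 by ring.
  by rewrite !sq_mul -[X in _ + X]mul1n -mulnDl leq_mul2r uv2 orbT.
rewrite /family_blowup in near_j near_k *; lia.
Qed.

Lemma close_family_arith M m n dj dk : 0 < M -> (6 * M) ^ 3 < m -> n = 6 * M * m ->
  12 * m ^ 4 <= 6 * n ^ 3 + 12 * n * (dj + dk) ->
  4 * (6 * M) ^ 4 * dj <= n ^ 3 -> 4 * (6 * M) ^ 4 * dk <= n ^ 3 -> False.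
Proof.
set K := 4 * (6 * M) ^ 4 => M_gt0 m_gt n_eq gap dj_le dk_le.
have K_gt0 : 0 < K by rewrite muln_gt0 expn_gt0 muln_gt0 M_gt0.
have gapK : K * (12 * m ^ 4) <= K * (6 * n ^ 3) + 12 * n * (K * dj + K * dk).
  have -> : K * (6 * n ^ 3) + 12 * n * (K * dj + K * dk)
    = K * (6 * n ^ 3 + 12 * n * (dj + dk)) by ring.
  exact: leq_mul (leqnn K) gap.
have distK : 12 * n * (K * dj + K * dk) <= K * (6 * m ^ 4).
  apply: leq_trans (leq_mul (leqnn _) (leq_add dj_le dk_le)) _.
  by rewrite n_eq /K; apply: eq_leq; ring.
have : K * (6 * m ^ 4) <= K * (6 * n ^ 3) by lia.
by rewrite leq_pmul2l // leq_pmul2l // n_eq expnMn expnS leq_pmul2r ?expn_gt0; lia.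
Qed.

Lemma INR_addn m k : INR (m + k) = (INR m + INR k)%R.
Proof. exact: plus_INR. Qed.

Lemma INR_muln m k : INR (m * k) = (INR m * INR k)%R.
Proof. exact: mult_INR. Qed.

Lemma INR_expn m k : INR (m ^ k) = (INR m ^ k)%R.
Proof. by elim: k => [|k IHk]; rewrite ?expn0 // expnS INR_muln IHk. Qed.

Lemma leq_of_INR_le_mul K d g : (0 < INR K)%R -> (INR d <= / INR K * INR g)%R -> K * d <= g.
Proof.
move=> K_gt0 d_le; apply/leP/INR_le; rewrite INR_muln.
have := Rmult_le_compat_l _ _ _ (Rlt_le _ _ K_gt0) d_le.
by rewrite -Rmult_assoc Rinv_r ?Rmult_1_l //; lra.
Qed.

Lemma ex_lt_density r m (F : hgraph m) (c eta : R) :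
  turan_density_is r F c -> (0 < eta)%R ->
  exists N, forall n, N <= n -> (INR (ex r F n) < (c + eta) * INR 'C(n, r))%R.
Proof.
move=> dens eta_gt0; have [N0 close] := dens eta eta_gt0.
exists (N0 + r) => n n_ge.
have C_gt0 : (0 < INR 'C(n, r))%R by apply: (lt_INR 0); apply/ltP; rewrite bin_gt0; lia.
have /Rabs_def2[ratio_lt _] := close n ltac:(apply/leP; lia).
apply: (Rmult_lt_reg_r (/ INR 'C(n, r))); first exact: Rinv_0_lt_compat.
by rewrite Rmult_assoc Rinv_r ?Rmult_1_r; lra.
Qed.

Lemma near_extremal_arith (c a e eps w C N g : R) :
  (0 < c)%R -> (0 < e)%R -> (e <= eps)%R -> (e <= 1 / 2)%R -> (0 <= w)%R ->
  (w < (c + c * e / 2) * C)%R -> (C * 6 <= N ^ 3)%R -> (a * N ^ 2 <= c * e / 2 * N ^ 3)%R ->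
  (c * N ^ 3 <= 6 * g + a * N ^ 2)%R -> ((1 - eps) * w < g)%R.
Proof.
move=> c_gt0 e_gt0 e_le_eps e_le_half w_ge0 w_lt C_le a_le g_ge.
have C_gt0 : (0 < C)%R.
  by apply: (Rmult_lt_reg_l (c + c * e / 2)); rewrite ?Rmult_0_r; nra.
have step1 : ((1 - eps) * w <= (1 - e) * w)%R by nra.
have step2 : ((1 - e) * w < (1 - e) * ((c + c * e / 2) * C))%R.
  by apply: Rmult_lt_compat_l; lra.
have step3 : ((1 - e) * ((c + c * e / 2) * C) <= (1 - e / 2) * c * C)%R.
  have : (0 <= c * C * (e * e))%R by apply: Rmult_le_pos; nra.
  nra.
have step4 : ((1 - e / 2) * c * C <= (1 - e / 2) * c * (N ^ 3 / 6))%R.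
  by apply: Rmult_le_compat_l; nra.
nra.
Qed.

Lemma near_extremal_of_density m (F : hgraph m) (c a eps : R) :
  turan_density_is 3 F c -> (0 < c)%R -> (0 < eps)%R ->
  exists N, forall n g, N <= n -> (c * INR n ^ 3 <= 6 * INR g + a * INR n ^ 2)%R ->
    ((1 - eps) * INR (ex 3 F n) < INR g)%R.
Proof.
move=> dens c_gt0 eps_gt0.
pose e := Rmin eps (1 / 2).
have e_gt0 : (0 < e)%R by apply: Rmin_glb_lt; lra.
have ce_gt0 : (0 < c * e)%R by nra.
have [N1 ex_lt] := ex_lt_density dens (ltac:(lra) : (0 < c * e / 2)%R).
have [N2 N2_gt] := INR_unbounded (2 * a / (c * e)).
exists (N1 + N2) => n g n_ge; apply: (near_extremal_arith c_gt0 e_gt0).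
- exact: Rmin_l.
- exact: Rmin_r.
- exact: pos_INR.
- by apply: ex_lt; lia.
- by have := le_INR _ _ (leP (bin3_le n)); rewrite INR_muln INR_expn [INR 6]/=; lra.
have n_gt : (2 * a < c * e * INR n)%R.
  have : (2 * a / (c * e) < INR n)%R by apply: Rlt_le_trans N2_gt (le_INR _ _ (leP _)); lia.
  by rewrite /Rdiv => /(Rmult_lt_compat_r (c * e) _ _ ce_gt0); rewrite Rmult_assoc Rinv_l; lra.
have : (0 <= INR n ^ 2)%R by apply: pow_le; apply: pos_INR.
nra.
Qed.

Lemma K4_turan_value : (1 - (2 / (INR 4 - 1)) ^ 2 = 5 / 9)%R.
Proof. by rewrite [INR 4]/=; lra. Qed.

Lemma blowup_near_extremal eps : turan_density_is 3 (complete 3 4) (5 / 9) -> (0 < eps)%R ->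
  exists N, forall n x y, N <= n -> n = 3 * (x + y) ->
    ((1 - eps) * INR (ex 3 (complete 3 4) n) < INR #|blowup n x y|)%R.
Proof.
move=> dens eps_gt0.
have [N near] := near_extremal_of_density 3 dens (ltac:(lra) : (0 < 5 / 9)%R) eps_gt0.
exists N => n x y n_ge n_eq; apply: (near n); first exact: n_ge.
have := le_INR _ _ (leP (blowup_card_ge n_eq)).
by rewrite INR_addn (INR_muln 5) (INR_muln 54) (INR_muln 27) !INR_expn
  [INR 5]/= [INR 54]/= [INR 27]/=; lra.
Qed.

Theorem proposition1p10 :
  (forall l : nat, (4 <= l)%N ->
     turan_density_is 3 (complete 3 l) (1 - (2 / (INR l - 1)) ^ 2)%R) ->
  stability_number_infinite 3 (complete 3 4).
Proof.
move=> turan t t_gt0 [m0 [Hs [Hs_uniform stable]]].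
have dens : turan_density_is 3 (complete 3 4) (5 / 9) by rewrite -K4_turan_value; exact: turan.
pose M := t.+1; pose K := 4 * (6 * M) ^ 4.
have K_gt0 : (0 < INR K)%R by apply: (lt_INR 0); apply/ltP; rewrite muln_gt0 !expn_gt0.
have [eps [n0 [eps_gt0 close]]] := stable (/ INR K)%R (Rinv_0_lt_compat _ K_gt0).
have [N near] := blowup_near_extremal dens eps_gt0.
pose m := (n0 + m0 + N + (6 * M) ^ 3).+1; pose n := 6 * M * m.
have n_ge : n0 + m0 + N <= n by rewrite /n /m; nia.
have close_family (j : 'I_M) : exists i : 'I_t,
    [exists s, K * edit_dist (family_blowup M m j.+1) (relabel s (Hs n i)) <= n ^ 3].
  have j_le : j.+1 <= 2 * M by have := ltn_ord j; lia.
  have [i [s dist_le]] := close n ltac:(lia) ltac:(lia) _ (blowup_uniform _ _ _)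
    (blowup_K4_free _ _ _) (near n _ _ ltac:(lia) (family_blowup_order m j_le)).
  exists i; apply/existsP; exists s; apply: leq_trans (leq_of_INR_le_mul K_gt0 dist_le) _.
  exact: leq_trans (card_uniform_le (blowup_uniform _ _ _)) (leq_trans (leq_pmulr _ _) (bin3_le n)).
have [j [k [i [jk /existsP[sj dj] /existsP[sk dk]]]]] := pigeonhole_ord (ltnSn t) close_family.
apply: (close_family_arith (m := m) (n := n)) dj dk => //; first by rewrite /m; lia.
by apply: family_far_apart; [rewrite ltnS jk ltn_ord | apply: Hs_uniform; lia].
Qed.
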